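(* Let $G$ be a finite group and $S$ one of the sporadic groups $Suz, HS, McL, He, HN, Th, O'N, Ly, Ru$. If $|G| = |S|$, then $G$ is neither a Frobenius group nor a 2-Frobenius group.
   Context: A finite group $G$ is a 2-Frobenius group if it has a normal series $1 \trianglelefteq A \trianglelefteq B \trianglelefteq G$ such that $B$ is a Frobenius group with Frobenius kernel $A$ and $G/A$ is a Frobenius group with Frobenius kernel $B/A$. Orders: $|Suz|=2^{13}\cdot3^7\cdot5^2\cdot7\cdot11\cdot13$, $|HS|=2^9\cdot3^2\cdot5^3\cdot7\cdot11$, $|McL|=2^7\cdot3^6\cdot5^3\cdot7\cdot11$, $|He|=2^{10}\cdot3^3\cdot5^2\cdot7^3\cdot17$, $|HN|=2^{14}\cdot3^6\cdot5^6\cdot7\cdot11\cdot19$, $|Th|=2^{15}\cdot3^{10}\cdot5^3\cdot7^2\cdot13\cdot19\cdot31$, $|O'N|=2^9\cdot3^4\cdot5\cdot7^3\cdot11\cdot19\cdot31$, $|Ly|=2^8\cdot3^7\cdot5^6\cdot7\cdot11\cdot31\cdot37\cdot67$, $|Ru|=2^{14}\cdot3^3\cdot5^3\cdot7\cdot13\cdot29$. *)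

From mathcomp Require Import all_boot all_fingroup all_solvable.
Set Implicit Arguments. Unset Strict Implicit. Unset Printing Implicit Defensive.
Local Open Scope group_scope.

Definition two_Frobenius (gT : finGroupType) (G : {group gT}) : Prop :=
  exists (A B : {group gT}),
    [/\ A <| G, B <| G, A \subset B,
        [Frobenius B with kernel A] & [Frobenius (G / A) with kernel (B / A)]].

Definition order_Suz : nat := 2^13 * 3^7 * 5^2 * 7 * 11 * 13.
Definition order_HS  : nat := 2^9 * 3^2 * 5^3 * 7 * 11.
Definition order_McL : nat := 2^7 * 3^6 * 5^3 * 7 * 11.
Definition order_He  : nat := 2^10 * 3^3 * 5^2 * 7^3 * 17.
Definition order_HN  : nat := 2^14 * 3^6 * 5^6 * 7 * 11 * 19.
Definition order_Th  : nat := 2^15 * 3^10 * 5^3 * 7^2 * 13 * 19 * 31.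
Definition order_ON  : nat := 2^9 * 3^4 * 5 * 7^3 * 11 * 19 * 31.
Definition order_Ly  : nat := 2^8 * 3^7 * 5^6 * 7 * 11 * 31 * 37 * 67.
Definition order_Ru  : nat := 2^14 * 3^3 * 5^3 * 7 * 13 * 29.

Definition sporadic_orders : seq nat :=
  [:: order_Suz; order_HS; order_McL; order_He; order_HN;
      order_Th; order_ON; order_Ly; order_Ru].

From Stdlib Require Import Arith NArith.
From mathcomp Require Import all_boot all_fingroup all_solvable.
From mathcomp Require vcharacter.

Set Implicit Arguments.
Unset Strict Implicit.
Unset Printing Implicit Defensive.

(* If G = K ><| H is a Frobenius group then, for all primes p and q, a Sylow
   q-subgroup Q of H normalises some Sylow p-subgroup P of K (coprime action)
   and acts semiregularly on it, so #|Q| divides #|P| - 1.  Hence #|G| = k * h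
   with k, h > 1 coprime and h_q | k_p - 1 for all p, q: (k, h) are
   "Frobenius numbers".  A 2-Frobenius group has order a * b * c where (a, b)
   and (b, c) are Frobenius numbers (a = #|A|, b = #|B / A|).

   Writing n as a list fl of pairs
   (prime, exponent), Frobenius numbers k * h = n yield a "Frobenius split"
   of fl (the primes of h), a boolean condition on prime powers only; a triple
   a * b * c = n yields a "2-Frobenius split" (the primes of b, the others
   being shared between a and c with an admissible exponent).  Enumerating all
   sublists of fl gives a certificate [frobenius_free fl] excluding both, which
   is evaluated for the nine sporadic orders (in binary arithmetic). *)

Definition frobenius_numbers (k h : nat) : Prop :=
  [/\ 1 < k, 1 < h, coprime k h & forall p q : nat, h`_q %| (k`_p).-1].

Definition fact_val (fl : seq (nat * nat)) : nat := \prod_(x <- fl) x.1 ^ x.2.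

Definition prime_factorization (fl : seq (nat * nat)) : bool :=
  all (fun x => prime x.1) fl && uniq (map fst fl).

Fixpoint subseqs {T : Type} (s : seq T) : seq (seq T) :=
  if s is x :: s' then [seq x :: t | t <- subseqs s'] ++ subseqs s' else [:: [::]].

Lemma filter_in_subseqs (T : eqType) (P : pred T) (s : seq T) :
  filter P s \in subseqs s.
Proof.
elim: s => [|x s IHs] //=; rewrite mem_cat.
by case: (P x); rewrite ?(map_f (cons x)) ?IHs ?orbT.
Qed.

Definition dvdn_pred_pow (q e p i : nat) : bool :=
  N.eqb (N.modulo (N.pred (N.pow (N.of_nat p) (N.of_nat i)))
                  (N.pow (N.of_nat q) (N.of_nat e))) 0.

Lemma Nat2N_expn m n : N.of_nat (m ^ n) = N.pow (N.of_nat m) (N.of_nat n).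
Proof.
rewrite -Nat2N.inj_pow; congr N.of_nat.
by elim: n => //= n IHn; rewrite expnS IHn.
Qed.

Lemma dvdn_Nmod d m : 0 < d -> (d %| m) = N.eqb (N.of_nat m mod N.of_nat d) 0.
Proof.
move=> d_gt0; rewrite -Nat2N.inj_mod; apply/idP/N.eqb_spec.
- by case/dvdnP=> k ->; rewrite -multE Nat.Div0.mod_mul.
- move=> /(f_equal N.to_nat); rewrite Nat2N.id => /Nat.Lcm0.mod_divide [k ->].
  by rewrite multE dvdn_mull.
Qed.

Lemma dvdn_pred_powE q e p i : 0 < q ->
  dvdn_pred_pow q e p i = (q ^ e %| (p ^ i).-1).
Proof.
by move=> q_gt0; rewrite dvdn_Nmod ?expn_gt0 ?q_gt0 // Nat2N.inj_pred !Nat2N_expn.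
Qed.

(* A split of fl into the primes hs of a Frobenius complement and the rest,
   the primes of the kernel, compatible with the divisibility conditions. *)
Definition frobenius_split (fl hs : seq (nat * nat)) : bool :=
  let ks := [seq x <- fl | x \notin hs] in
  [&& hs != [::], ks != [::] &
      all (fun y => all (fun x => dvdn_pred_pow y.1 y.2 x.1 x.2) ks) hs].

(* The p-part of a can be p ^ i (and that of c then p ^ (e - i)), for the
   primes (p, e) not in b, given the primes bs of b. *)
Definition admissible (bs : seq (nat * nat)) (x : nat * nat) (i : nat) : bool :=
  all (fun y => dvdn_pred_pow y.1 y.2 x.1 i && dvdn_pred_pow x.1 (x.2 - i) y.1 y.2) bs.

(* A choice of the primes bs of the middle factor b of a 2-Frobenius triple:
   b > 1, every other prime has an admissible exponent in a, and a > 1 and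
   c > 1 are both possible. *)
Definition two_frobenius_split (fl bs : seq (nat * nat)) : bool :=
  let rest := [seq x <- fl | x \notin bs] in
  let exps (x : nat * nat) := iota 0 x.2.+1 in
  [&& bs != [::],
      all (fun x => has (admissible bs x) (exps x)) rest,
      has (fun x => has (fun i => (0 < i) && admissible bs x i) (exps x)) rest &
      has (fun x => has (fun i => (i < x.2) && admissible bs x i) (exps x)) rest].

Definition frobenius_free (fl : seq (nat * nat)) : bool :=
  [&& prime_factorization fl, ~~ has (frobenius_split fl) (subseqs fl)
    & ~~ has (two_frobenius_split fl) (subseqs fl)].

Lemma partnM_p'nat m n r : prime r -> 0 < m -> 0 < n -> ~~ (r %| n) ->
  (m * n)`_r = m`_r.
Proof.
by move=> pr m_gt0 n_gt0 rn; rewrite partnM // (part_p'nat (n := n)) ?muln1 ?p'natE.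
Qed.

Lemma fact_val_prime_dvd fl r : all (fun x => prime x.1) fl -> prime r ->
  r %| fact_val fl -> exists2 x, x \in fl & x.1 = r.
Proof.
move=> /allP fl_pr pr; rewrite /fact_val Euclid_dvd_prod // big_has.
case/hasP=> x xfl; rewrite Euclid_dvdX // => /andP[rx _]; exists x => //.
by apply/eqP; rewrite eq_sym -dvdn_prime2 ?fl_pr.
Qed.

Lemma fact_val_gt0 fl : all (fun x => prime x.1) fl -> 0 < fact_val fl.
Proof.
move=> /allP fl_pr; rewrite /fact_val big_seq prodn_cond_gt0 // => x /fl_pr.
by move/prime_gt0=> x_gt0; rewrite expn_gt0 x_gt0.
Qed.

Lemma fact_val_part fl x : prime_factorization fl -> x \in fl ->
  (fact_val fl)`_(x.1) = x.1 ^ x.2.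
Proof.
elim: fl => [|y s IHs] // /andP[/andP[py ps] /andP[ys us]].
have fact_s : prime_factorization s by apply/andP.
have s_gt0 := fact_val_gt0 ps; have y_gt0 : 0 < y.1 ^ y.2 by rewrite expn_gt0 prime_gt0.
rewrite /fact_val big_cons -/(fact_val s) inE => /predU1P[->|xs].
  rewrite partnM_p'nat // ?part_pnat_id ?pnatX ?pnat_id //.
  by apply/negP=> /fact_val_prime_dvd[] // z zs zy; rewrite -zy map_f in ys.
have px : prime x.1 by apply: (allP ps).
rewrite mulnC partnM_p'nat ?IHs //; rewrite Euclid_dvdX // dvdn_prime2 //.
by apply/nandP; left; apply: contraNneq ys => <-; rewrite map_f.
Qed.

Lemma prime_dvd_coprime r m n : prime r -> coprime m n -> r %| m -> ~~ (r %| n).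
Proof.
by move=> pr co_mn rm; rewrite -prime_coprime // (coprime_dvdl rm co_mn).
Qed.

Lemma fact_val_pdiv fl m : all (fun x => prime x.1) fl -> 1 < m ->
  m %| fact_val fl -> exists2 x, x \in fl & x.1 = pdiv m.
Proof.
move=> fl_pr m_gt1 m_dvd; apply: fact_val_prime_dvd fl_pr (pdiv_prime m_gt1) _.
exact: dvdn_trans (pdiv_dvd m) m_dvd.
Qed.

Lemma mem_filter_compl (T : eqType) (P : pred T) (s : seq T) x :
  (x \in [seq y <- s | y \notin filter P s]) = ~~ P x && (x \in s).
Proof. by rewrite !mem_filter negb_and; case: (x \in s); rewrite ?orbF ?andbF. Qed.

Lemma frobenius_split_witness fl k h : prime_factorization fl ->
  k * h = fact_val fl -> frobenius_numbers k h ->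
  frobenius_split fl [seq x <- fl | x.1 %| h].
Proof.
move=> fact_fl def_n [k_gt1 h_gt1 co_kh dvd_hk].
have [fl_pr _] := andP fact_fl; have pr x : x \in fl -> prime x.1 := allP fl_pr x.
have [k_gt0 h_gt0] := (ltnW k_gt1, ltnW h_gt1).
have k_dvd : k %| fact_val fl by rewrite -def_n dvdn_mulr.
have h_dvd : h %| fact_val fl by rewrite -def_n dvdn_mull.
have part_h x : x \in fl -> x.1 %| h -> h`_(x.1) = x.1 ^ x.2.
  move=> xfl xh; rewrite -(fact_val_part fact_fl xfl) -def_n mulnC partnM_p'nat ?pr //.
  by rewrite coprime_sym in co_kh; apply: prime_dvd_coprime co_kh xh; apply: pr.
have part_k x : x \in fl -> ~~ (x.1 %| h) -> k`_(x.1) = x.1 ^ x.2.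
  by move=> xfl xh; rewrite -(fact_val_part fact_fl xfl) -def_n partnM_p'nat ?pr.
apply/and3P; split.
- have [x xfl def_x] := fact_val_pdiv fl_pr h_gt1 h_dvd.
  by rewrite -has_filter; apply/hasP; exists x; rewrite ?def_x ?pdiv_dvd.
- have [x xfl def_x] := fact_val_pdiv fl_pr k_gt1 k_dvd.
  rewrite -has_filter; apply/hasP; exists x; rewrite // mem_filter negb_and def_x.
  by rewrite (prime_dvd_coprime (pdiv_prime k_gt1) co_kh (pdiv_dvd k)).
- apply/allP=> y; rewrite mem_filter => /andP[yh yfl]; apply/allP=> x.
  rewrite mem_filter_compl => /andP[xh xfl].
  by rewrite dvdn_pred_powE ?prime_gt0 ?pr // -part_h // -part_k.
Qed.

Section TwoFrobeniusTriple.

(* A prime p not dividing b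
   has exponent i = logn p a in a and e - i in c, which is admissible. *)
Variables (fl : seq (nat * nat)) (a b c : nat).
Hypotheses (fact_fl : prime_factorization fl) (def_n : a * b * c = fact_val fl).
Hypotheses (frob_ab : frobenius_numbers a b) (frob_bc : frobenius_numbers b c).

Let fl_pr : all (fun x => prime x.1) fl. Proof. by case/andP: fact_fl. Qed.
Let pr x : x \in fl -> prime x.1. Proof. exact: (allP fl_pr). Qed.
Let a_gt0 : 0 < a. Proof. by case: frob_ab => /ltnW. Qed.
Let b_gt0 : 0 < b. Proof. by case: frob_bc => /ltnW. Qed.
Let c_gt0 : 0 < c. Proof. by case: frob_bc => _ /ltnW. Qed.

Lemma triple_part_mid x : x \in fl -> x.1 %| b -> b`_(x.1) = x.1 ^ x.2.
Proof.
move=> xfl xb; have [_ _ co_ab _] := frob_ab; have [_ _ co_bc _] := frob_bc.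
rewrite -(fact_val_part fact_fl xfl) -def_n mulnAC mulnC.
rewrite partnM_p'nat ?muln_gt0 ?a_gt0 ?c_gt0 ?pr // Euclid_dvdM ?pr // negb_or.
rewrite (prime_dvd_coprime (pr xfl) co_bc xb) andbT.
by rewrite coprime_sym in co_ab; apply: prime_dvd_coprime co_ab xb; apply: pr.
Qed.

Lemma triple_exponents x : x \in fl -> ~~ (x.1 %| b) ->
  logn x.1 a + logn x.1 c = x.2 /\
  admissible [seq y <- fl | y.1 %| b] x (logn x.1 a).
Proof.
move=> xfl xb; have [_ _ _ dvd_ba] := frob_ab; have [_ _ _ dvd_cb] := frob_bc.
have e_sum : logn x.1 a + logn x.1 c = x.2.
  apply/eqP; rewrite -(eqn_exp2l _ _ (prime_gt1 (pr xfl))) -(fact_val_part fact_fl xfl).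
  by rewrite -def_n mulnAC partnM_p'nat ?muln_gt0 ?a_gt0 ?pr // partnM // expnD -!p_part.
split=> //; apply/allP=> y; rewrite mem_filter => /andP[yb yfl].
rewrite !dvdn_pred_powE ?prime_gt0 ?pr // -triple_part_mid // -e_sum addKn -!p_part.
by rewrite dvd_ba dvd_cb.
Qed.

Lemma triple_exponent_range x : x \in fl -> ~~ (x.1 %| b) ->
  logn x.1 a \in iota 0 x.2.+1.
Proof.
by move=> xfl xb; have [e_sum _] := triple_exponents xfl xb; rewrite mem_iota ltnS -e_sum leq_addr.
Qed.

Lemma triple_prime_outside m : 1 < m -> m %| fact_val fl -> coprime m b ->
  exists2 x, x \in fl & ~~ (x.1 %| b) && (0 < logn x.1 m).
Proof.
move=> m_gt1 m_dvd co_mb; have [x xfl def_x] := fact_val_pdiv fl_pr m_gt1 m_dvd.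
have pr_m := pdiv_prime m_gt1; exists x; rewrite // def_x.
by rewrite (prime_dvd_coprime pr_m co_mb (pdiv_dvd m)) logn_gt0 mem_primes pr_m pdiv_dvd ltnW.
Qed.

Lemma two_frobenius_split_witness :
  two_frobenius_split fl [seq x <- fl | x.1 %| b].
Proof.
have [a_gt1 b_gt1 co_ab _] := frob_ab; have [_ c_gt1 co_bc _] := frob_bc.
apply/and4P; split.
- have b_dvd : b %| fact_val fl by rewrite -def_n -mulnA mulnCA dvdn_mulr.
  have [x xfl def_x] := fact_val_pdiv fl_pr b_gt1 b_dvd.
  by rewrite -has_filter; apply/hasP; exists x; rewrite ?def_x ?pdiv_dvd.
- apply/allP=> x; rewrite mem_filter_compl => /andP[xb xfl].
  have [_ adm] := triple_exponents xfl xb.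
  by apply/hasP; exists (logn x.1 a); rewrite ?triple_exponent_range.
- have a_dvd : a %| fact_val fl by rewrite -def_n -mulnA dvdn_mulr.
  have [x xfl /andP[xb la_gt0]] := triple_prime_outside a_gt1 a_dvd co_ab.
  have [_ adm] := triple_exponents xfl xb.
  apply/hasP; exists x; first by rewrite mem_filter_compl xb.
  by apply/hasP; exists (logn x.1 a); rewrite ?triple_exponent_range // la_gt0 adm.
- have c_dvd : c %| fact_val fl by rewrite -def_n dvdn_mull.
  rewrite coprime_sym in co_bc.
  have [x xfl /andP[xb lc_gt0]] := triple_prime_outside c_gt1 c_dvd co_bc.
  have [e_sum adm] := triple_exponents xfl xb.
  apply/hasP; exists x; first by rewrite mem_filter_compl xb.
  apply/hasP; exists (logn x.1 a); rewrite ?triple_exponent_range // adm andbT.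
  by rewrite -e_sum -{1}[logn x.1 a]addn0 ltn_add2l.
Qed.

End TwoFrobeniusTriple.

Lemma frobenius_free_numbers fl k h : frobenius_free fl ->
  k * h = fact_val fl -> ~ frobenius_numbers k h.
Proof.
case/and3P=> fact_fl /hasPn no_split _ def_n frob_kh.
have := no_split _ (filter_in_subseqs (fun x => x.1 %| h) fl).
by rewrite (frobenius_split_witness fact_fl def_n frob_kh).
Qed.

Lemma frobenius_free_triples fl a b c : frobenius_free fl ->
  a * b * c = fact_val fl -> ~ (frobenius_numbers a b /\ frobenius_numbers b c).
Proof.
case/and3P=> fact_fl _ /hasPn no_split def_n [frob_ab frob_bc].
have := no_split _ (filter_in_subseqs (fun x => x.1 %| b) fl).
by rewrite (two_frobenius_split_witness fact_fl def_n frob_ab frob_bc).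
Qed.

Definition sporadic_factorizations : seq (seq (nat * nat)) :=
  [:: [:: (2, 13); (3, 7); (5, 2); (7, 1); (11, 1); (13, 1)];
      [:: (2, 9); (3, 2); (5, 3); (7, 1); (11, 1)];
      [:: (2, 7); (3, 6); (5, 3); (7, 1); (11, 1)];
      [:: (2, 10); (3, 3); (5, 2); (7, 3); (17, 1)];
      [:: (2, 14); (3, 6); (5, 6); (7, 1); (11, 1); (19, 1)];
      [:: (2, 15); (3, 10); (5, 3); (7, 2); (13, 1); (19, 1); (31, 1)];
      [:: (2, 9); (3, 4); (5, 1); (7, 3); (11, 1); (19, 1); (31, 1)];
      [:: (2, 8); (3, 7); (5, 6); (7, 1); (11, 1); (31, 1); (37, 1); (67, 1)];
      [:: (2, 14); (3, 3); (5, 3); (7, 1); (13, 1); (29, 1)]].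

(* The sporadic orders are the values of these factorisations; the prime
   powers are abstracted before reassociating, to avoid unary evaluation. *)
Lemma sporadic_orders_factored :
  sporadic_orders = map fact_val sporadic_factorizations.
Proof.
rewrite /sporadic_orders /order_Suz /order_HS /order_McL /order_He /order_HN.
rewrite /order_Th /order_ON /order_Ly /order_Ru /=; repeat congr cons;
  rewrite /fact_val !big_cons big_nil /= !expn1 muln1;
  repeat match goal with |- context [?p ^ ?e] => generalize (p ^ e) end;
  by move=> *; rewrite !mulnA.
Qed.

Lemma sporadic_frobenius_free : all frobenius_free sporadic_factorizations.
Proof. by vm_compute. Qed.

Local Open Scope group_scope.

(* In a Frobenius group K ><| H, each q-part of #|H| divides the p-part of
   #|K| minus one: a Sylow q-subgroup of H acts semiregularly on an invariant
   Sylow p-subgroup of K. *)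
Lemma Frobenius_part_dvd_pred (gT : finGroupType) (G K H : {group gT}) (p q : nat) :
  [Frobenius G = K ><| H] -> #|H|`_q %| (#|K|`_p).-1.
Proof.
move=> frobG; have [defG _ _ _ _] := Frobenius_context frobG.
have [_ _ nKH _] := sdprodP defG.
have [Q sylQ] := Sylow_exists q H; have sQH := pHall_sub sylQ.
have nKQ : Q \subset 'N(K) := subset_trans sQH nKH.
have coKQ : coprime #|K| #|Q| := coprime_dvdr (cardSg sQH) (Frobenius_coprime frobG).
have solQ : solvable Q := nilpotent_sol (pgroup_nil (pHall_pgroup sylQ)).
have [P sylP nPQ] := sol_coprime_Sylow_exists p solQ nKQ coKQ.
have regPQ : semiregular P Q :=
  semiregularS (pHall_sub sylP) sQH (Frobenius_reg_ker frobG).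
rewrite -(card_Hall sylQ) -(card_Hall sylP).
exact: regular_norm_dvd_pred nPQ regPQ.
Qed.

Lemma Frobenius_semidirect_numbers (gT : finGroupType) (G K H : {group gT}) :
  [Frobenius G = K ><| H] -> frobenius_numbers #|K| #|H|.
Proof.
move=> frobG; have [_ ntK ntH _ _] := Frobenius_context frobG.
split; rewrite ?cardG_gt1 //; first exact: Frobenius_coprime frobG.
by move=> p q; apply: Frobenius_part_dvd_pred frobG.
Qed.

(* A Frobenius group has order k * h for Frobenius numbers (k, h); the
   existence of the kernel is Frobenius' theorem. *)
Lemma Frobenius_order_numbers (gT : finGroupType) (G : {group gT}) :
  [Frobenius G] -> exists k h, (k * h)%N = #|G| /\ frobenius_numbers k h.
Proof.
case/existsP=> H /vcharacter.Frobenius_kernel_exists[K frobG].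
exists #|K|, #|H|; split; last exact: Frobenius_semidirect_numbers frobG.
by have [defG _ _ _ _] := Frobenius_context frobG; rewrite (sdprod_card defG).
Qed.

(* A 2-Frobenius group has order a * b * c with (a, b) and (b, c) Frobenius
   numbers: a = #|A|, b = #|B / A| and c the order of a complement of B / A. *)
Lemma two_Frobenius_order_numbers (gT : finGroupType) (G : {group gT}) :
  two_Frobenius G -> exists a b c,
    [/\ (a * b * c)%N = #|G|, frobenius_numbers a b & frobenius_numbers b c].
Proof.
case=> A [B] [nsAG nsBG sAB /existsP[H frobB] /existsP[C frobGA]].
have [defB _ _ _ _] := Frobenius_context frobB.
have [defGA _ _ _ _] := Frobenius_context frobGA.
have nAB : B \subset 'N(A) := subset_trans (normal_sub nsBG) (normal_norm nsAG).
have cardBA : #|B / A| = #|H|.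
  apply/eqP; rewrite -(eqn_pmul2l (cardG_gt0 A)) card_quotient //.
  by rewrite Lagrange // (sdprod_card defB).
exists #|A|, #|B / A|, #|C|; split.
- rewrite -mulnA (sdprod_card defGA) card_quotient ?normal_norm //.
  by rewrite Lagrange ?normal_sub.
- by rewrite cardBA; apply: Frobenius_semidirect_numbers frobB.
- exact: Frobenius_semidirect_numbers frobGA.
Qed.

Theorem lemma2p13 (gT : finGroupType) (G : {group gT}) :
  #|G| \in sporadic_orders ->
  ~ [Frobenius G] /\ ~ two_Frobenius G.
Proof.
rewrite sporadic_orders_factored => /mapP[fl fl_spor cardG].
have free_fl := allP sporadic_frobenius_free fl fl_spor.
split.
- case/Frobenius_order_numbers=> k [h [kh_G frob_kh]].
  by apply: frobenius_free_numbers free_fl _ frob_kh; rewrite kh_G.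
- case/two_Frobenius_order_numbers=> a [b [c [abc_G frob_ab frob_bc]]].
  by apply: frobenius_free_triples free_fl _ (conj frob_ab frob_bc); rewrite abc_G.
Qed.
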